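(* Let $X$ be an $n$-dimensional projective space over a field and $K$ a $k$-dimensional subspace of $X$ with $-1\le k\le n-3$. Let $\mathcal B_K\subseteq\mathrm{Gr}_1(K)$ be a $(2,1)$-blocking set in $K$, let $\mathcal B_{X/K}$ be a $(2,1)$-blocking set in $X/K$, and for every point $P\in\mathrm{Gr}_0(K)$ let $\mathcal B_{X/P}$ be a $(1,0)$-blocking set in $X/P$ (i.e. a set of lines of $X$ through $P$ such that every plane of $X$ through $P$ contains one of them). Assume that for every line $L\in\mathrm{Gr}_1(K)\setminus\mathcal B_K$, the set $\bigcup_{P\in\mathrm{Gr}_0(L)}\bigl(\mathcal B_{X/P}\setminus\mathrm{Gr}_0(K/P)\bigr)$ blocks $\mathcal S_L:=\{S\in\mathrm{Gr}_2(X): K\cap S=L\}$, i.e. every $S\in\mathcal S_L$ contains one of its elements. Then the disjoint union $$\mathcal B:=\{T\in\mathrm{Gr}_1(X):\langle K,T\rangle\in\mathcal B_{X/K}\}\ \cup\ \bigcup_{P\in\mathrm{Gr}_0(K)}\bigl(\mathcal B_{X/P}\setminus\mathrm{Gr}_0(K/P)\bigr)\ \cup\ \mathcal B_K$$ is a $(2,1)$-blocking set in $X$.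
   Context: Projective dimension is used; $\mathrm{Gr}_d(Y)$ is the set of $d$-dimensional subspaces of $Y$. For a $k$-dimensional subspace $K$ of $X$, the quotient $X/K$ is the projective space of dimension $\dim X-k-1$ whose $r$-dimensional subspaces are the $(r+k+1)$-dimensional subspaces of $X$ containing $K$; $\langle K,T\rangle$ is regarded as an element of $X/K$. For a point $P$ of $K$, $K/P$ is the quotient of $K$ by $P$, so $\mathrm{Gr}_0(K/P)$ is the set of lines of $K$ through $P$ and $\mathrm{Gr}_0(X/P)$ the set of lines of $X$ through $P$. For $-1\le t\le s$, an $(s,t)$-blocking set in a projective space $Y$ is a set of $t$-dimensional subspaces of $Y$ such that every $s$-dimensional subspace of $Y$ contains at least one of them. *)

(* Projective space of projective dimension n over a field F
   = lattice of vector subspaces of 'rV[F]_(n.+1); a projective d-dimensional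
   subspace is a vector subspace of dimension d+1. *)
From HB Require Import structures.
From mathcomp Require Import all_boot all_order all_algebra.
Set Implicit Arguments. Unset Strict Implicit. Unset Printing Implicit Defensive.
Import GRing.Theory.
Local Open Scope ring_scope.

Section Proj.
Variables (F : fieldType) (vT : vectType F).

(* qGr K Y U r : U is an r-dimensional (projective) subspace of the quotient
   Y/K, i.e. a subspace of Y containing K of vector dimension \dim K + r + 1.
   With K = 0 this is Gr_r(Y). *)
Definition qGr (K Y U : {vspace vT}) (r : nat) : Prop :=
  [/\ (K <= U)%VS, (U <= Y)%VS & \dim U = (\dim K + r.+1)%N].

Definition blocking (K Y : {vspace vT}) (s t : nat) (B : {vspace vT} -> Prop)
  : Prop :=
  (forall T, B T -> qGr K Y T t) /\
  (forall S, qGr K Y S s -> exists T, B T /\ (T <= S)%VS).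

End Proj.

From HB Require Import structures.
From mathcomp Require Import all_boot all_order all_algebra.
From mathcomp Require Import zify.
From Stdlib Require Import Classical.
Import GRing.Theory.
Local Open Scope ring_scope.

(* A plane S of X meets K in a subspace of projective dimension -1, 0, 1 or 2,
   and each case is blocked by one family: if S is skew to K, a line of
   B_{X/K} inside <K,S> is cut out by S (modular law) to a line T of S with
   <K,T> in B_{X/K}; if S meets K in a point P, S is a line of X/P and so
   contains a line of B_{X/P}, which cannot lie in K; if S meets K in a line
   L, either L is in B_K or the hypothesis on S_L applies; if S lies in K,
   B_K blocks it. The three families are disjoint because their lines are
   respectively skew to K, meet K in a point without lying in K, and lie
   in K. *)

Section Subspaces.
Context {F : fieldType} {vT : vectType F}.
Implicit Types (K S T U Y : {vspace vT}) (B : {vspace vT} -> Prop).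

Lemma qGr0P Y U r : qGr 0 Y U r <-> (U <= Y)%VS /\ \dim U = r.+1.
Proof. by rewrite /qGr sub0v dimv0; split=> [[]|[]]. Qed.

Lemma addv_capv_modular K U S :
  (K <= U)%VS -> (K + U :&: S = U :&: (K + S))%VS.
Proof.
move=> sKU; apply/eqP; rewrite eqEsubv subv_add subv_cap sKU addvSl.
rewrite capvS ?addvSr //=.
apply/subvP=> x /memv_capP[xU /memv_addP[k kK [s sS xE]]]; rewrite xE in xU *.
apply: memv_add => //; apply/memv_capP; split=> //.
by rewrite -(addKr k s) memvD // memvN (subvP sKU).
Qed.

Lemma capv_eq0_dim_add K T :
  \dim (K + T) = (\dim K + \dim T)%N -> (K :&: T = 0)%VS.
Proof. by move=> dKT; apply/eqP; rewrite -dimv_eq0; have := dimv_sum_cap K T; lia. Qed.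

Lemma not_subv_dim_cap K S T :
  (T <= S)%VS -> (\dim (K :&: S) < \dim T)%N -> ~ (T <= K)%VS.
Proof. by move=> sTS + sTK; rewrite ltnNge dimvS // subv_cap sTK. Qed.

Lemma blocking_pullback {K Y s t B S} :
  blocking K Y s t B -> (K <= Y)%VS -> (S <= Y)%VS -> \dim S = s.+1 ->
  (K :&: S = 0)%VS -> exists2 T, (T <= S)%VS & \dim T = t.+1 /\ B (K + T)%VS.
Proof.
move=> [Bmem Bblocks] sKY sSY dS KS0.
have KS : qGr K Y (K + S) s.
  by split; rewrite ?addvSl ?subv_add ?sKY // dimv_disjoint_sum ?dS.
have [U [BU sUKS]] := Bblocks _ KS; have [sKU _ dU] := Bmem U BU.
have KTE : (K + U :&: S)%VS = U by rewrite addv_capv_modular //; apply/capv_idPl.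
exists (U :&: S)%VS; first exact: capvSr.
split; last by rewrite KTE.
have : (K :&: (U :&: S) = 0)%VS by apply/eqP; rewrite -subv0 -KS0 capvS ?capvSr.
by move/dimv_disjoint_sum; rewrite KTE dU; lia.
Qed.

End Subspaces.

Section BlockingUnion.
Variables (F : fieldType) (vT : vectType F) (K : {vspace vT}).
Variables (BK BXK : {vspace vT} -> Prop) (BXP : {vspace vT} -> {vspace vT} -> Prop).
Hypothesis BK_blocking : blocking 0 K 2 1 BK.
Hypothesis BXK_blocking : blocking K fullv 2 1 BXK.
Hypothesis BXP_blocking : forall P, qGr 0 K P 0 -> blocking P fullv 1 0 (BXP P).
Hypothesis BXP_blocks_planes : forall L, qGr 0 K L 1 -> ~ BK L ->
  forall S, qGr 0 fullv S 2 -> (K :&: S)%VS = L ->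
  exists T, (T <= S)%VS /\ exists P, [/\ qGr 0 L P 0, BXP P T & ~ qGr P K T 0].
Implicit Types (P S T : {vspace vT}).

Definition lifted_lines T := qGr 0 fullv T 1 /\ BXK (K + T)%VS.
Definition pencil_lines T := exists P, [/\ qGr 0 K P 0, BXP P T & ~ qGr P K T 0].
Definition union_lines T := [\/ lifted_lines T, pencil_lines T | BK T].

Lemma pencil_line_meets_K T : pencil_lines T ->
  exists P, [/\ qGr 0 K P 0, (P <= T)%VS, \dim T = 2 & ~ (T <= K)%VS].
Proof.
move=> [P [KP BT nPKT]]; have [Bmem _] := BXP_blocking _ KP.
have [sPT _ dT] := Bmem T BT; have /qGr0P[_ dP] := KP.
exists P; split=> //; first by rewrite dT dP.
by move=> sTK; apply: nPKT; split; rewrite // dT dP.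
Qed.

Lemma lifted_line_capv0 T : lifted_lines T -> (K :&: T = 0)%VS.
Proof.
move=> [/qGr0P[_ dT] BT]; have [Bmem _] := BXK_blocking.
by have [_ _ dKT] := Bmem _ BT; apply: capv_eq0_dim_add; rewrite dKT dT.
Qed.

Lemma BK_line T : BK T -> (T <= K)%VS /\ \dim T = 2.
Proof. by case: BK_blocking => Bmem _ /Bmem/qGr0P. Qed.

Lemma lifted_pencil_disjoint T : ~ (lifted_lines T /\ pencil_lines T).
Proof.
move=> [/lifted_line_capv0 KT0 /pencil_line_meets_K[P [/qGr0P[sPK dP] sPT _ _]]].
have : (P <= 0)%VS by rewrite -KT0 subv_cap sPK.
by rewrite subv0 => /eqP P0; rewrite P0 dimv0 in dP.
Qed.

Lemma lifted_BK_disjoint T : ~ (lifted_lines T /\ BK T).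
Proof.
move=> [/lifted_line_capv0 KT0 /BK_line[sTK dT]].
by move: dT; rewrite -(capv_idPr sTK) KT0 dimv0.
Qed.

Lemma pencil_BK_disjoint T : ~ (pencil_lines T /\ BK T).
Proof. by move=> [/pencil_line_meets_K[P [_ _ _ nsTK]] /BK_line[sTK _]]. Qed.

Lemma skew_plane_blocked {S} : \dim S = 3 -> (K :&: S = 0)%VS ->
  exists2 T, (T <= S)%VS & lifted_lines T.
Proof.
move=> dS KS0.
have [T sTS [dT BT]] := blocking_pullback BXK_blocking (subvf K) (subvf S) dS KS0.
by exists T; rewrite // /lifted_lines qGr0P subvf.
Qed.

Lemma plane_through_point_blocked {S} : \dim S = 3 -> \dim (K :&: S) = 1 ->
  exists2 T, (T <= S)%VS & pencil_lines T.
Proof.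
move=> dS dP; have KP : qGr 0 K (K :&: S) 0 by apply/qGr0P; rewrite capvSl.
have [Bmem Bblocks] := BXP_blocking _ KP.
have PS : qGr (K :&: S) fullv S 1 by split; rewrite ?capvSr ?subvf // dS dP.
have [T [BT sTS]] := Bblocks S PS.
exists T => //; exists (K :&: S)%VS; split=> // -[_ sTK _].
by apply: not_subv_dim_cap sTS _ sTK; have [_ _ ->] := Bmem T BT; rewrite dP.
Qed.

Lemma plane_through_line_blocked {S} : \dim S = 3 -> \dim (K :&: S) = 2 ->
  exists2 T, (T <= S)%VS & union_lines T.
Proof.
move=> dS dL; have KL : qGr 0 K (K :&: S) 1 by apply/qGr0P; rewrite capvSl.
have [BL | nBL] := classic (BK (K :&: S)).
  by exists (K :&: S)%VS; [exact: capvSr | constructor 3].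
have XS : qGr 0 fullv S 2 by apply/qGr0P; rewrite subvf.
have [T [sTS [P [/qGr0P[sPL dP] BT nPKT]]]] := BXP_blocks_planes _ KL nBL _ XS erefl.
exists T => //; constructor 2; exists P; split=> //.
by apply/qGr0P; split=> //; apply: subv_trans sPL (capvSl _ _).
Qed.

Lemma plane_in_K_blocked {S} : \dim S = 3 -> \dim (K :&: S) = 3 ->
  exists2 T, (T <= S)%VS & BK T.
Proof.
move=> dS dKS.
have : (S <= K :&: S)%VS by rewrite -(dimv_leqif_sup (capvSr K S)) dKS dS.
rewrite subv_cap => /andP[sSK _].
have [_ Bblocks] := BK_blocking.
have KS : qGr 0 K S 2 by apply/qGr0P.
by have [T [BT sTS]] := Bblocks S KS; exists T.
Qed.

Lemma union_lines_blocking : blocking 0 fullv 2 1 union_lines.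
Proof.
split=> [T [[]|/pencil_line_meets_K[_ [_ _ dT _]]|/BK_line[_ dT]] // | S /qGr0P[_ dS]].
- by apply/qGr0P; rewrite subvf.
- by apply/qGr0P; rewrite subvf.
have le3 : (\dim (K :&: S) <= 3)%N by rewrite -dS dimvS ?capvSr.
case dKS: (\dim (K :&: S)) le3 => [|[|[|[|//]]]] _.
- move/eqP: dKS; rewrite dimv_eq0 => /eqP KS0.
  have [T sTS lT] := skew_plane_blocked dS KS0.
  by exists T; split=> //; constructor 1.
- have [T sTS pT] := plane_through_point_blocked dS dKS.
  by exists T; split=> //; constructor 2.
- by have [T sTS uT] := plane_through_line_blocked dS dKS; exists T.
- have [T sTS BT] := plane_in_K_blocked dS dKS.
  by exists T; split=> //; constructor 3.
Qed.

End BlockingUnion.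

Theorem proposition3p19 (F : fieldType) (n : nat)
  (K : {vspace 'rV[F]_(n.+1)})
  (BK BXK : {vspace 'rV[F]_(n.+1)} -> Prop)
  (BXP : {vspace 'rV[F]_(n.+1)} -> {vspace 'rV[F]_(n.+1)} -> Prop) :
  (\dim K + 2 <= n)%N ->
  blocking 0%VS K 2 1 BK ->
  blocking K fullv 2 1 BXK ->
  (forall P, qGr 0%VS K P 0 -> blocking P fullv 1 0 (BXP P)) ->
  (forall L, qGr 0%VS K L 1 -> ~ BK L ->
     forall S, qGr 0%VS fullv S 2 -> (K :&: S)%VS = L ->
       exists T, (T <= S)%VS /\
         exists P, [/\ qGr 0%VS L P 0, BXP P T & ~ qGr P K T 0]) ->
  let B1 := fun T => qGr 0%VS fullv T 1 /\ BXK (K + T)%VS in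
  let B2 := fun T => exists P, [/\ qGr 0%VS K P 0, BXP P T & ~ qGr P K T 0] in
  blocking 0%VS fullv 2 1 (fun T => [\/ B1 T, B2 T | BK T]) /\
  (forall T, ~ (B1 T /\ B2 T)) /\ (forall T, ~ (B1 T /\ BK T)) /\
  (forall T, ~ (B2 T /\ BK T)).
Proof.
move=> _ BK_blocking BXK_blocking BXP_blocking BXP_blocks_planes B1 B2.
split; first exact: union_lines_blocking.
split; first exact: lifted_pencil_disjoint.
split; first exact: lifted_BK_disjoint.
exact: pencil_BK_disjoint.
Qed.
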